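(* Let $A_o,A_i\in\mathbb R^{n_y\times n_x}$, let $B_o,B_i\in\mathbb R^{n_y\times n_y}$ and $C_o,C_i\in\mathbb R^{n_x\times n_x}$ be invertible, and let $W_o=(\det(B_oB_o^T))^{1/(2n_y)}\|C_o\|_{\mathrm F}$ and $W_i=(\det(B_iB_i^T))^{1/(2n_y)}\|C_i\|_{\mathrm F}$ be the generalized cone widths of the inclusions $y\in\{(A_o+B_o\Delta C_o)x:\|\Delta\|\le1\}$ and $y\in\{(A_i+B_i\Delta C_i)x:\|\Delta\|\le1\}$. If the first (outer) inclusion contains the second (inner) inclusion, then $W_o\ge W_i$.
   Context: $\|\cdot\|$ is the spectral norm, $\|\cdot\|_{\mathrm F}$ the Frobenius norm. An inclusion contains another if every pair $(x,y)\in\mathbb C^{n_x}\times\mathbb C^{n_y}$ satisfying the second also satisfies the first. The generalized cone width formula equals $\sqrt{\mathrm E(R^2(x))}$ with $x$ standard complex normal and $R(x)=\sqrt{x^*C^TCx}\,(\det(BB^T))^{1/(2n_y)}$. *)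

From HB Require Import structures.
From mathcomp Require Import all_boot all_order all_algebra.
From mathcomp Require Import complex.
From mathcomp Require Import reals exp.
Set Implicit Arguments. Unset Strict Implicit. Unset Printing Implicit Defensive.
Import Order.TTheory GRing.Theory Num.Theory.
Local Open Scope ring_scope.

Section Defs.
Variable R : realType.

Definition cmx (m n : nat) (A : 'M[R]_(m, n)) : 'M[R[i]]_(m, n) :=
  map_mx (fun r : R => Complex r 0) A.

Definition cnorm2 (n : nat) (v : 'cV[R[i]]_n) : R[i] :=
  \sum_(k < n) `|v k 0| ^+ 2.

(* spectral (operator 2-)norm of Delta is at most 1:
   ||Delta v||_2 <= ||v||_2 for every complex vector v *)
Definition spec_le1 (m n : nat) (D : 'M[R[i]]_(m, n)) : Prop :=
  forall v : 'cV[R[i]]_n, cnorm2 (D *m v) <= cnorm2 v.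

Definition inclusion (nx ny : nat) (A : 'M[R]_(ny, nx)) (B : 'M[R]_ny)
    (C : 'M[R]_nx) (x : 'cV[R[i]]_nx) (y : 'cV[R[i]]_ny) : Prop :=
  exists D : 'M[R[i]]_(ny, nx),
    spec_le1 D /\ y = (cmx A + cmx B *m D *m cmx C) *m x.

Definition contains (nx ny : nat)
    (I1 I2 : 'cV[R[i]]_nx -> 'cV[R[i]]_ny -> Prop) : Prop :=
  forall x y, I2 x y -> I1 x y.

Definition frob (m n : nat) (M : 'M[R]_(m, n)) : R :=
  Num.sqrt (\sum_(i < m) \sum_(j < n) M i j ^+ 2).

Definition cone_width (nx ny : nat) (B : 'M[R]_ny) (C : 'M[R]_nx) : R :=
  powR (\det (B *m B^T)) (1 / (2 * ny%:R)) * frob C.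

End Defs.

From HB Require Import structures.
From mathcomp Require Import all_boot all_order all_algebra.
From mathcomp Require Import complex.
From mathcomp Require Import reals exp.
From mathcomp Require Import ring.

(* Fix a real vector x and put r_i = |C_i x|, r_o = |C_o x|.  For every u in the
   unit ball, the rank-one matrix u (C_i x)^T / r_i has spectral norm at most 1 and
   maps C_i x to r_i u, so A_i x + r_i B_i u lies in the inner, hence the outer,
   set: it equals A_o x + B_o z for some z with |z| <= r_o.  Subtracting the
   representations obtained for u and -u gives r_i B_o^-1 B_i u = (z_1 - z_2) / 2,
   so r_i B_o^-1 B_i maps the unit ball into the ball of radius r_o.  Its
   eigenvalues are therefore bounded by r_o, whence
   r_i^ny |det B_i| <= r_o^ny |det B_o|.  As (det(B B^T))^(1/(2 ny)) = |det B|^(1/ny),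
   taking for x the standard basis vectors and summing the squares of the column
   inequalities yields W_i <= W_o. *)

Set Implicit Arguments.
Unset Strict Implicit.
Unset Printing Implicit Defensive.

Import Order.TTheory GRing.Theory Num.Theory.
Local Open Scope ring_scope.
Local Open Scope complex_scope.

Lemma lagrange_identity (R : comPzRingType) n (x y : 'I_n -> R) :
  \sum_k \sum_l (x k * y l - x l * y k) ^+ 2 =
  ((\sum_k x k ^+ 2) * (\sum_k y k ^+ 2) - (\sum_k x k * y k) ^+ 2) *+ 2.
Proof.
have sqrs : \sum_k \sum_l (x k * y l) ^+ 2 = (\sum_k x k ^+ 2) * (\sum_k y k ^+ 2).
  rewrite mulr_suml; apply: eq_bigr => k _; rewrite mulr_sumr.
  by apply: eq_bigr => l _; rewrite exprMn.
have cross : \sum_k \sum_l (x k * y l) * (x l * y k) = (\sum_k x k * y k) ^+ 2.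
  rewrite expr2 mulr_suml; apply: eq_bigr => k _; rewrite mulr_sumr.
  by apply: eq_bigr => l _; rewrite mulrACA [in RHS]mulrACA [y l * _]mulrC.
under eq_bigr do under eq_bigr do rewrite sqrrB addrAC.
under eq_bigr do rewrite sumrB big_split /= sumrMnl.
rewrite sumrB big_split /= sumrMnl sqrs exchange_big /= sqrs cross.
by rewrite [RHS]mulr2n opprD addrACA.
Qed.

Lemma real_CauchySchwarz (R : numDomainType) n (x y : 'I_n -> R) :
  (forall k, x k \is Num.real) -> (forall k, y k \is Num.real) ->
  (\sum_k x k * y k) ^+ 2 <= (\sum_k x k ^+ 2) * (\sum_k y k ^+ 2).
Proof.
move=> xR yR.
have : 0 <= \sum_k \sum_l (x k * y l - x l * y k) ^+ 2.
  by do 2!apply: sumr_ge0 => ? _; rewrite -realEsqr realB // realM.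
by rewrite lagrange_identity pmulrn_lge0 // subr_ge0.
Qed.

Lemma norm_CauchySchwarz (R : numDomainType) n (x y : 'I_n -> R) :
  `|\sum_k x k * y k| ^+ 2 <= (\sum_k `|x k| ^+ 2) * (\sum_k `|y k| ^+ 2).
Proof.
have norm_sum_le : `|\sum_k x k * y k| <= \sum_k `|x k| * `|y k|.
  by apply: le_trans (ler_norm_sum _ _ _) _; apply: ler_sum => k _; rewrite normrM.
apply: le_trans (real_CauchySchwarz (fun k => normr_real (x k))
                                   (fun k => normr_real (y k))).
by rewrite lerXn2r ?nnegrE ?sumr_ge0 // => k _; rewrite mulr_ge0.
Qed.

Lemma norm_det_le (F : numClosedFieldType) n (M : 'M[F]_n) (c : F) :
  (forall a, eigenvalue M a -> `|a| <= c) -> `|\det M| <= c ^+ n.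
Proof.
move=> eigen_le.
have [r charM] := closed_field_poly_normal (char_poly M).
rewrite (monicP (char_poly_monic M)) scale1r in charM.
have size_r : size r = n.
  by have := size_char_poly M; rewrite charM size_prod_XsubC => -[].
have -> : `|\det M| = \prod_(z <- r) `|z|.
  have := char_poly_det M; rewrite -horner_coef0 charM horner_prod.
  move=> /(congr1 Num.norm); rewrite normrM normrX normrN1 expr1n mul1r => <-.
  by rewrite normr_prod; apply: eq_bigr => z _; rewrite hornerXsubC add0r normrN.
rewrite -size_r -iter_mulr_1 -(count_predT r) -big_const_seq big_seq [X in _ <= X]big_seq.
apply: ler_prod => z zr; rewrite normr_ge0 eigen_le //.
by rewrite eigenvalue_root_char charM root_prod_XsubC.
Qed.

Section Vectors.
Variable R : realType.
Local Notation C := R[i].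

Lemma cnorm2_ge0 n (v : 'cV[C]_n) : 0 <= cnorm2 v.
Proof. by apply: sumr_ge0 => k _; rewrite exprn_ge0. Qed.

Lemma cnorm2_eq0 n (v : 'cV[C]_n) : (cnorm2 v == 0) = (v == 0).
Proof.
apply/idP/eqP => [|->]; last by rewrite /cnorm2 big1 // => k _; rewrite mxE normr0 expr0n.
rewrite psumr_eq0 => [/allP v0|k _]; last exact: exprn_ge0.
apply/matrixP => k l; rewrite (ord1 l) mxE.
by have := v0 k (mem_index_enum k); rewrite /= expf_eq0 normr_eq0 => /andP[_ /eqP].
Qed.

Lemma cnorm2Z n (c : C) (v : 'cV[C]_n) : cnorm2 (c *: v) = `|c| ^+ 2 * cnorm2 v.
Proof. by rewrite /cnorm2 mulr_sumr; apply: eq_bigr => k _; rewrite mxE normrM exprMn. Qed.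

Lemma cnorm2N n (v : 'cV[C]_n) : cnorm2 (- v) = cnorm2 v.
Proof. by rewrite -scaleN1r cnorm2Z normrN1 expr1n mul1r. Qed.

Lemma cnorm2B_le n (v w : 'cV[C]_n) : cnorm2 (v - w) <= (cnorm2 v + cnorm2 w) *+ 2.
Proof.
rewrite /cnorm2 -big_split /= -sumrMnl; apply: ler_sum => k _; rewrite !mxE.
apply: (@le_trans _ _ ((`|v k 0| + `|w k 0|) ^+ 2)).
  by rewrite lerXn2r ?nnegrE ?addr_ge0 ?ler_normB.
rewrite -subr_ge0 (_ : _ - _ = (`|v k 0| - `|w k 0|) ^+ 2); last by ring.
by rewrite -realEsqr realB ?normr_real.
Qed.

Lemma cnorm2_half_sub_le n (v w : 'cV[C]_n) (c : C) :
  cnorm2 v <= c -> cnorm2 w <= c -> cnorm2 (2^-1 *: (v - w)) <= c.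
Proof.
move=> vc wc; rewrite cnorm2Z normfV ger0_norm ?ler0n //.
apply: (@le_trans _ _ (2^-1 ^+ 2 * ((c + c) *+ 2))).
  by rewrite ler_wpM2l ?exprn_ge0 ?invr_ge0 ?ler0n // (le_trans (cnorm2B_le v w)) ?lerMn2r ?lerD.
suff -> : 2^-1 ^+ 2 * ((c + c) *+ 2) = c by [].
by field.
Qed.

Lemma eigenvalue_norm_le n (M : 'M[C]_n) (c : C) : 0 <= c ->
    (forall u, cnorm2 u <= 1 -> cnorm2 (M *m u) <= c ^+ 2) ->
  forall a, eigenvalue M^T a -> `|a| <= c.
Proof.
move=> c0 M_le a /eigenvalueP[v vMa v0].
have Mv : M *m v^T = a *: v^T by rewrite -[M]trmxK -trmx_mul vMa linearZ.
have v_gt0 : 0 < cnorm2 v^T by rewrite lt_def cnorm2_eq0 trmx_eq0 v0 cnorm2_ge0.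
pose s := sqrtc (cnorm2 v^T)^-1.
have s2 : `|s| ^+ 2 = (cnorm2 v^T)^-1.
  by rewrite ger0_norm ?sqr_sqrtc // sqrtc_ge0 invr_ge0 ltW.
have /M_le : cnorm2 (s *: v^T) <= 1 by rewrite cnorm2Z s2 mulVf ?gt_eqF.
rewrite -scalemxAr Mv scalerA cnorm2Z normrM exprMn mulrAC s2 mulVf ?gt_eqF // mul1r.
by rewrite ler_pXn2r ?nnegrE.
Qed.

Lemma norm_det_le_contraction n (M : 'M[C]_n) (c : C) : 0 <= c ->
    (forall u, cnorm2 u <= 1 -> cnorm2 (M *m u) <= c ^+ 2) ->
  `|\det M| <= c ^+ n.
Proof. by move=> c0 M_le; rewrite -det_tr; apply/norm_det_le/eigenvalue_norm_le. Qed.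

Lemma normC_real (r : R) : `|r%:C| = `|r|%:C :> C.
Proof. by rewrite normc_def /= expr0n /= addr0 sqrtr_sqr. Qed.

Lemma sqr_normC_real (r : R) : `|r%:C| ^+ 2 = (r ^+ 2)%:C :> C.
Proof. by rewrite normC_real -rmorphXn /= real_normK ?num_real. Qed.

Definition vnorm n (w : 'cV[R]_n) : R := Num.sqrt (\sum_k w k 0 ^+ 2).

Lemma vnorm_ge0 n (w : 'cV[R]_n) : 0 <= vnorm w.
Proof. exact: sqrtr_ge0. Qed.

Lemma vnorm_sqr n (w : 'cV[R]_n) : vnorm w ^+ 2 = \sum_k w k 0 ^+ 2.
Proof. by rewrite sqr_sqrtr // sumr_ge0 // => k _; rewrite sqr_ge0. Qed.

Lemma cmxE m n (A : 'M[R]_(m, n)) i j : cmx A i j = (A i j)%:C.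
Proof. by rewrite mxE. Qed.

Lemma cmxM m n p (A : 'M[R]_(m, n)) (B : 'M[R]_(n, p)) : cmx (A *m B) = cmx A *m cmx B.
Proof. exact: (map_mxM (real_complex R)). Qed.

Lemma det_cmx n (A : 'M[R]_n) : \det (cmx A) = (\det A)%:C.
Proof. exact: (det_map_mx (real_complex R)). Qed.

Lemma cnorm2_cmx n (w : 'cV[R]_n) : cnorm2 (cmx w) = (vnorm w ^+ 2)%:C.
Proof.
by rewrite vnorm_sqr /cnorm2 rmorph_sum; apply: eq_bigr => k _; rewrite cmxE sqr_normC_real.
Qed.

Lemma rank_one_contraction m n (w : 'cV[R]_m) (u : 'cV[C]_n) : cnorm2 u <= 1 ->
  exists2 D : 'M[C]_(n, m), spec_le1 D & D *m cmx w = (vnorm w)%:C *: u.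
Proof.
move=> u_le1; have [->|w0] := eqVneq (vnorm w) 0.
  exists 0; last by rewrite mul0mx scale0r.
  by move=> v; rewrite mul0mx (eqP (_ : cnorm2 (0 : 'cV[C]_n) == 0)) ?cnorm2_eq0 ?cnorm2_ge0.
pose a l := (w l 0 / vnorm w)%:C.
have a_sum : \sum_l `|a l| ^+ 2 = 1.
  rewrite /a; under eq_bigr do rewrite sqr_normC_real expr_div_n.
  by rewrite -rmorph_sum -mulr_suml -vnorm_sqr divff ?expf_neq0.
exists (\matrix_(k, l) (u k 0 * a l)).
- move=> v.
  have -> : \matrix_(k, l) (u k 0 * a l) *m v = (\sum_l a l * v l 0) *: u.
    apply/matrixP => k j; rewrite (ord1 j) !mxE mulr_suml.
    by apply: eq_bigr => l _; rewrite mxE [u k 0 * _]mulrC mulrAC.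
  rewrite cnorm2Z; apply: (@le_trans _ _ (`|\sum_l a l * v l 0| ^+ 2)).
    by rewrite ler_piMr ?exprn_ge0.
  by apply: le_trans (norm_CauchySchwarz _ _) _; rewrite a_sum mul1r.
- apply/matrixP => k j; rewrite (ord1 j) !mxE.
  under eq_bigr do rewrite !mxE -mulrA -rmorphM mulrAC -expr2.
  rewrite -mulr_sumr -rmorph_sum -mulr_suml -vnorm_sqr.
  by rewrite expr2 mulrK ?unitfE // mulrC.
Qed.

Lemma unitmx_cmx n (A : 'M[R]_n) : (cmx A \in unitmx) = (A \in unitmx).
Proof. by rewrite !unitmxE det_cmx !unitfE fmorph_eq0. Qed.

End Vectors.

Section Inclusions.
Variable R : realType.
Local Notation C := R[i].
Variables (nx ny : nat) (Ao Ai : 'M[R]_(ny, nx)) (Bo Bi : 'M[R]_ny) (Co Ci : 'M[R]_nx).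
Hypothesis outer_contains_inner : contains (inclusion Ao Bo Co) (inclusion Ai Bi Ci).

Lemma inner_point_in_outer (x : 'cV[R]_nx) (u : 'cV[C]_ny) : cnorm2 u <= 1 ->
  exists2 z, cnorm2 z <= (vnorm (Co *m x))%:C ^+ 2 &
    cmx (Ai *m x) + cmx Bi *m ((vnorm (Ci *m x))%:C *: u) = cmx (Ao *m x) + cmx Bo *m z.
Proof.
move=> u_le1; have [D D_le1 D_Cix] := rank_one_contraction (Ci *m x) u_le1.
have [|Do [Do_le1]] :=
  outer_contains_inner (x := cmx x) (y := (cmx Ai + cmx Bi *m D *m cmx Ci) *m cmx x).
  by exists D.
rewrite !mulmxDl -!mulmxA -!cmxM D_Cix => ->.
exists (Do *m cmx (Co *m x)) => //.
by apply: le_trans (Do_le1 _) _; rewrite cnorm2_cmx rmorphXn.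
Qed.

Lemma inner_ball_in_outer_ball (x : 'cV[R]_nx) (u : 'cV[C]_ny) :
    Bo \in unitmx -> cnorm2 u <= 1 ->
  cnorm2 (((vnorm (Ci *m x))%:C *: (invmx (cmx Bo) *m cmx Bi)) *m u)
    <= (vnorm (Co *m x))%:C ^+ 2.
Proof.
move=> Bo_unit u_le1.
have [z1 z1_le E1] := inner_point_in_outer x u_le1.
have [|z2 z2_le] := inner_point_in_outer x (u := - u); first by rewrite cnorm2N.
rewrite scalerN mulmxN => E2.
set X := cmx Bi *m _ in E1 E2.
have two_X : X *+ 2 = cmx Bo *m (z1 - z2).
  apply: (addrI (cmx (Ao *m x) + cmx Bo *m z2)).
  by rewrite mulmxBr [RHS]addrACA subrr addr0 -E1 -E2 mulr2n addrA subrK.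
have cBo_unit : cmx Bo \in unitmx by rewrite unitmx_cmx.
suff -> : (vnorm (Ci *m x))%:C *: (invmx (cmx Bo) *m cmx Bi) *m u = 2^-1 *: (z1 - z2).
  exact: cnorm2_half_sub_le.
rewrite -scalemxAl -mulmxA !scalemxAr -/X; apply: (canLR (mulKmx cBo_unit)).
by rewrite -scalemxAr -two_X -scalerMnr scalerMnl -mulr_natr mulVf ?scale1r ?pnatr_eq0.
Qed.

Lemma det_ratio_le (x : 'cV[R]_nx) : Bo \in unitmx ->
  vnorm (Ci *m x) ^+ ny * `|\det Bi| <= vnorm (Co *m x) ^+ ny * `|\det Bo|.
Proof.
move=> Bo_unit.
have ro_ge0 : 0 <= (vnorm (Co *m x))%:C by rewrite ler0c vnorm_ge0.
have := norm_det_le_contraction ro_ge0 (fun u => inner_ball_in_outer_ball (u := u) x Bo_unit).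
rewrite detZ det_mulmx det_inv !det_cmx normrM normrX normrM normfV !normC_real.
rewrite (ger0_norm (vnorm_ge0 _)) -!rmorphXn -fmorphV -!rmorphM lecR => le_ratio.
have detBo_gt0 : 0 < `|\det Bo| by rewrite normr_gt0 -unitfE -unitmxE.
by rewrite -ler_pdivrMr // mulrC mulrCA.
Qed.

End Inclusions.

Section ConeWidth.
Variable R : realType.

Definition det_scale n (B : 'M[R]_n) : R := powR (\det (B *m B^T)) (1 / (2 * n%:R)).

Lemma det_scale_ge0 n (B : 'M[R]_n) : 0 <= det_scale B.
Proof. exact: powR_ge0. Qed.

Lemma det_scale_expn n (B : 'M[R]_n) : (0 < n)%N -> det_scale B ^+ n = `|\det B|.
Proof.
move=> n_gt0; have det_BBt : \det (B *m B^T) = `|\det B| `^ 2%:R.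
  by rewrite det_mulmx det_tr powR_mulrn // real_normK ?num_real.
rewrite /det_scale det_BBt -powR_mulrn ?powR_ge0 // -!powRrM.
have -> : 2%:R * (1 / (2 * n%:R) * n%:R) = 1 :> R by field; rewrite pnatr_eq0 -lt0n.
exact: powRr1.
Qed.

Lemma frob_sqr m n (M : 'M[R]_(m, n)) : frob M ^+ 2 = \sum_j vnorm (col j M) ^+ 2.
Proof.
rewrite sqr_sqrtr; last by do 2!apply: sumr_ge0 => ? _; rewrite sqr_ge0.
rewrite exchange_big; apply: eq_bigr => j _; rewrite vnorm_sqr.
by apply: eq_bigr => i _; rewrite mxE.
Qed.

Lemma cone_width_le nx ny (Bi Bo : 'M[R]_ny) (Ci Co : 'M[R]_nx) : (0 < ny)%N ->
    (forall x : 'cV[R]_nx,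
      vnorm (Ci *m x) ^+ ny * `|\det Bi| <= vnorm (Co *m x) ^+ ny * `|\det Bo|) ->
  cone_width Bi Ci <= cone_width Bo Co.
Proof.
move=> ny_gt0 le_x.
have le_col j : det_scale Bi * vnorm (col j Ci) <= det_scale Bo * vnorm (col j Co).
  rewrite -(ler_pXn2r ny_gt0) ?nnegrE ?mulr_ge0 ?det_scale_ge0 ?vnorm_ge0 //.
  by rewrite !exprMn !det_scale_expn // mulrC [X in _ <= X]mulrC !colE le_x.
rewrite /cone_width -/(det_scale Bi) -/(det_scale Bo).
rewrite -(ler_pXn2r (isT : 0 < 2)%N) ?nnegrE ?mulr_ge0 ?det_scale_ge0 ?sqrtr_ge0 //.
rewrite !exprMn !frob_sqr !mulr_sumr; apply: ler_sum => j _.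
by rewrite -!exprMn lerXn2r ?nnegrE ?mulr_ge0 ?det_scale_ge0 ?vnorm_ge0.
Qed.

End ConeWidth.

Theorem proposition3 (R : realType) (nx ny : nat) (hnx : (0 < nx)%N) (hny : (0 < ny)%N)
    (Ao Ai : 'M[R]_(ny, nx)) (Bo Bi : 'M[R]_ny) (Co Ci : 'M[R]_nx) :
  Bo \in unitmx -> Bi \in unitmx -> Co \in unitmx -> Ci \in unitmx ->
  contains (inclusion Ao Bo Co) (inclusion Ai Bi Ci) ->
  cone_width Bi Ci <= cone_width Bo Co.
Proof.
move=> Bo_unit _ _ _ outer_contains_inner.
apply: cone_width_le hny _ => x.
exact: det_ratio_le outer_contains_inner x Bo_unit.
Qed.
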